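(* Let $p>q>1$ be relatively prime integers and write $p=mq+r$ with $m\in\mathbb{N}$ and $1\le r\le q-1$. Then for every integer $k\ge 1$, the map $T_{\frac{p}{q}}\circ T_{kq}$ has an absolutely continuous invariant probability measure with density $$f_{\frac{p}{q}\circ kq}(x)=\frac{p-r}{p}\left(1+\frac{q}{p-r}\mathbf{1}_{[0,\frac{r}{q})}(x)\right),\qquad x\in[0,1),$$ which in particular does not depend on $k$.
   Context: For a real number $\gamma>1$ let $T_\gamma:[0,1)\to[0,1)$, $T_\gamma(x)=\gamma x \bmod 1$. The density is with respect to Lebesgue measure on $[0,1)$. *)

From HB Require Import structures.
From mathcomp Require Import all_boot all_order all_algebra.
From mathcomp Require Import all_classical all_reals all_analysis.
Set Implicit Arguments. Unset Strict Implicit. Unset Printing Implicit Defensive.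
Import Order.TTheory GRing.Theory Num.Theory.
Local Open Scope classical_set_scope.
Local Open Scope ring_scope.

Definition Tmap {R : realType} (gamma : R) (x : R) : R :=
  gamma * x - (Num.floor (gamma * x))%:~R.

Definition I01 {R : realType} : set R := `[0%R, 1%R[%classic.

(* f is the density of a T-invariant probability measure on [0,1)
   absolutely continuous w.r.t. Lebesgue measure: f is measurable and
   nonnegative on [0,1), integrates to 1 over [0,1), and the measure
   A |-> \int_A f is T-invariant, i.e. mu(T^{-1} A) = mu(A) for every
   Borel A included in [0,1) (preimage taken inside [0,1)). *)
Definition invariant_density {R : realType} (T : R -> R) (f : R -> R) : Prop :=
  measurable_fun I01 f /\
  (forall x, I01 x -> 0 <= f x) /\
  (\int[lebesgue_measure]_(x in I01) (f x)%:E = 1)%E /\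
  (forall A : set R, measurable A -> A `<=` I01 ->
     (\int[lebesgue_measure]_(x in I01 `&` (T @^-1` A)) (f x)%:E
      = \int[lebesgue_measure]_(x in A) (f x)%:E)%E).

From HB Require Import structures.
From mathcomp Require Import all_boot all_order all_algebra.
From mathcomp Require Import all_classical all_reals all_analysis.
Import Order.TTheory GRing.Theory Num.Theory.
From mathcomp Require Import ring lra zify.
Local Open Scope classical_set_scope.
Local Open Scope ring_scope.

(* Write N = m + t with m integer and 0 <= t <= 1, and let f = (m + 1_[0,t)) / N.
   The full branches of T_N pull a set A back to copies of A shrunk by the factor N,
   and the last, partial branch pulls it back to a shrunk copy of A ∩ [0,t); hence
   T_N pushes Lebesgue measure forward to f dx.  Conversely, for an integer n and
   t = j/n, the interval [0,t) is the union of j full branches of T_n, so T_n pushes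
   f dx forward to (m/N + t/N) dx = dx.  Composing, T_N ∘ T_n preserves f dx; the
   statement is the case N = p/q, t = r/q = kr/kq, n = kq. *)

Section Tmap_lebesgue.
Context {R : realType}.
Local Notation mu := (@lebesgue_measure R).

Lemma measurable_affine (a b : R) : measurable_fun setT (fun x : R => a * x - b).
Proof.
apply: measurable_realfun.measurable_funB; last exact: measurable_cst.
by apply: measurable_realfun.measurable_funM; [exact: measurable_cst|exact: measurable_id].
Qed.

Lemma lebesgue_measure_affine_preimage (a b : R) (E : set R) : 0 < a -> measurable E ->
  mu ((fun x : R => a * x - b) @^-1` E) = ((a^-1)%:E * mu E)%E.
Proof.
move=> a0 mE.
have mf : measurable_fun (setT : set (measurableTypeR R))
    (fun x : measurableTypeR R => (a * x - b : measurableTypeR R)).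
  exact: measurable_affine.
pose pm := measure_function_pushforward__canonical__measure_function_Measure mu mf.
have -> : mu E = (a%:E * pm E)%E.
  have := @lebesgue_measure_unique R
    (measure_function_mscale__canonical__measure_function_Measure (NngNum (ltW a0)) pm).
  move=> /(_ _ E mE) /= -> // _ [[u v]] _ <-.
  rewrite /mscale /= /pushforward.
  have -> : (fun x : R => a * x - b) @^-1` `]u, v] = `](u + b) / a, (v + b) / a]%classic.
    by apply/seteqP; split => x /=; rewrite !in_itv /= ltr_pdivrMr // ler_pdivlMr //;
      move=> /andP[? ?]; apply/andP; split; lra.
  rewrite !lebesgue_measure_itv /= !lte_fin ltr_pM2r ?invr_gt0 // ltrD2r.
  case: ifPn => _; last by rewrite mule0.
  by rewrite -EFinB -EFinM; congr EFin; field; rewrite gt_eqF.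
by rewrite muleA -EFinM mulVf ?gt_eqF // mul1e.
Qed.

Lemma measure_setI_itv_split (a b c : R) (X : set R) : a <= b <= c -> measurable X ->
  mu (`[a, c[ `&` X) = (mu (`[a, b[ `&` X) + mu (`[b, c[ `&` X))%E.
Proof.
move=> /andP[ab bc] mX.
rewrite (@itv_bndbnd_setU _ _ _ (BLeft b)) ?bnd_simp // setIUl measureU //.
- exact: measurableI.
- exact: measurableI.
- by apply/seteqP; split => x //= [[+ _] [+ _]]; rewrite !in_itv /=; lra.
Qed.

Lemma I01_Tmap (N x : R) : I01 (Tmap N x).
Proof.
rewrite /I01 /Tmap /= in_itv /=; have /andP[lo hi] := floor_itv (N * x).
by rewrite intrD in hi; apply/andP; split; lra.
Qed.

Lemma measurable_Tmap (N : R) : measurable_fun setT (Tmap N).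
Proof.
apply: measurable_realfun.measurable_funB.
  by apply: measurable_realfun.measurable_funM; [exact: measurable_cst|exact: measurable_id].
rewrite (_ : (fun x : R => _) = (fun y : R => (Num.floor y)%:~R : R) \o ( *%R N)) //.
apply: measurableT_comp; last first.
  by apply: measurable_realfun.measurable_funM; [exact: measurable_cst|exact: measurable_id].
apply: measurable_realfun.nondecreasing_measurable => // u v uv.
by rewrite ler_int le_floor.
Qed.

Lemma measurable_Tmap_preimage (N : R) (E : set R) : measurable E ->
  measurable (Tmap N @^-1` E).
Proof. by move=> mE; rewrite -[_ @^-1` _]setTI; exact: measurable_Tmap. Qed.

Lemma Tmap_branch (N x : R) (j : nat) : j%:R <= N * x < j%:R + 1 ->
  Tmap N x = N * x - j%:R.
Proof. by move=> hj; rewrite /Tmap (@floor_def _ _ j%:Z) // intrD. Qed.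

Lemma Tmap_preimage_branch (N s : R) (j : nat) (E : set R) : 0 < N -> 0 <= s <= 1 ->
  `[j%:R / N, (j%:R + s) / N[ `&` Tmap N @^-1` E =
  (fun x : R => N * x - j%:R) @^-1` (`[0, s[ `&` E).
Proof.
move=> N0 /andP[s0 s1]; apply/seteqP; split => x /=;
  rewrite !in_itv /= ler_pdivrMr // ltr_pdivlMr //.
- move=> [/andP[lo hi] hE].
  rewrite (@Tmap_branch N x j) in hE; last by apply/andP; split; lra.
  by split => //; apply/andP; split; lra.
- move=> [/andP[lo hi] hE].
  rewrite (@Tmap_branch N x j); last by apply/andP; split; lra.
  by split => //; apply/andP; split; lra.
Qed.

Lemma lebesgue_Tmap_preimage_branch (N s : R) (j : nat) (E : set R) :
  0 < N -> 0 <= s <= 1 -> measurable E ->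
  mu (`[j%:R / N, (j%:R + s) / N[ `&` Tmap N @^-1` E) =
  ((N^-1)%:E * mu (`[0%R, s[ `&` E))%E.
Proof.
move=> N0 s01 mE; rewrite Tmap_preimage_branch // lebesgue_measure_affine_preimage //.
exact: measurableI.
Qed.

Lemma lebesgue_Tmap_preimage_prefix (N : R) (n : nat) (E : set R) : 0 < N -> measurable E ->
  mu (`[0, n%:R / N[ `&` Tmap N @^-1` E) = ((n%:R / N)%:E * mu (I01 `&` E))%E.
Proof.
move=> N0 mE; elim: n => [|n IHn].
  by rewrite mul0r set_itvco0 set0I measure0 mul0e.
rewrite -natr1 (@measure_setI_itv_split _ (n%:R / N)); last first.
- exact: measurable_Tmap_preimage.
- apply/andP; split; first by rewrite divr_ge0 // ltW.
  by rewrite ler_pM2r ?invr_gt0 // lerDl.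
rewrite IHn lebesgue_Tmap_preimage_branch ?ler01 ?lexx //.
by rewrite -ge0_muleDl ?lee_fin ?divr_ge0 ?invr_ge0 ?ler0n ?ltW // -EFinD mulrDl mul1r.
Qed.

Lemma integral_step (c d : R) (J D : set R) : 0 <= c -> 0 <= d ->
  measurable J -> measurable D ->
  (\int[mu]_(x in D) (c + d * \1_J x)%:E = c%:E * mu D + d%:E * mu (J `&` D))%E.
Proof.
move=> c0 d0 mJ mD.
under eq_integral do rewrite EFinD EFinM.
rewrite ge0_integralD //; last 2 first.
- by move=> x _; rewrite -EFinM lee_fin mulr_ge0.
- by apply/measurable_realfun.measurable_EFinP; apply: measurable_realfun.measurable_funM => //;
    exact: measurable_cst.
rewrite integral_cst // ge0_integralZl_EFin //; first by rewrite integral_indic.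
exact/measurable_realfun.measurable_EFinP.
Qed.

Lemma sub_itv_I01 {s : R} : s <= 1 -> `[0, s[ `<=` I01.
Proof. by move=> s1 x; rewrite /I01 /= !in_itv /= => /andP[? ?]; apply/andP; split; lra. Qed.

Lemma integral_step_Tmap_nat_preimage (c d : R) (n j : nat) (E : set R) :
  (0 < n)%N -> (j <= n)%N -> 0 <= c -> 0 <= d -> measurable E ->
  (\int[mu]_(x in I01 `&` Tmap n%:R @^-1` E) (c + d * \1_`[0, j%:R / n%:R[ x)%:E
   = (c + d * (j%:R / n%:R))%:E * mu (I01 `&` E))%E.
Proof.
move=> n0 jn c0 d0 mE.
have n0R : 0 < n%:R :> R by rewrite ltr0n.
have I01E : I01 = `[0, n%:R / n%:R[%classic :> set R by rewrite divff ?gt_eqF.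
rewrite integral_step //; last first.
  by apply: measurableI; [exact: measurable_itv|exact: measurable_Tmap_preimage].
have jn1 : j%:R / n%:R <= 1 :> R by rewrite ler_pdivrMr // mul1r ler_nat.
rewrite setIA (setIidl (sub_itv_I01 jn1)).
rewrite {1}I01E !lebesgue_Tmap_preimage_prefix // divff ?gt_eqF // mul1e muleA -EFinM.
by rewrite -ge0_muleDl ?lee_fin ?mulr_ge0 ?divr_ge0.
Qed.

Lemma lebesgue_Tmap_preimage (N t : R) (m : nat) (A : set R) :
  0 < N -> N = m%:R + t -> 0 <= t <= 1 -> measurable A ->
  mu (I01 `&` Tmap N @^-1` A) =
  (\int[mu]_(x in I01 `&` A) (m%:R / N + N^-1 * \1_`[0, t[ x)%:E)%E.
Proof.
move=> N0 Nmt t01 mA; case/andP: (t01) => t0 t1.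
have I01E : I01 = `[0, (m%:R + t) / N[%classic by rewrite -Nmt divff ?gt_eqF.
have c0 : 0 <= m%:R / N by rewrite divr_ge0 // ltW.
have d0 : 0 <= N^-1 by rewrite invr_ge0 ltW.
rewrite integral_step //; last first.
  by apply: measurableI => //; exact: measurable_itv.
rewrite setIA (setIidl (sub_itv_I01 t1)).
rewrite {1}I01E (@measure_setI_itv_split _ (m%:R / N)); last first.
- exact: measurable_Tmap_preimage.
- apply/andP; split; first by rewrite divr_ge0 // ltW.
  by rewrite ler_pM2r ?invr_gt0 // lerDl.
by rewrite lebesgue_Tmap_preimage_prefix // lebesgue_Tmap_preimage_branch.
Qed.

Lemma invariant_density_Tmap_comp (N t : R) (m n j : nat) :
  0 < N -> N = m%:R + t -> (0 < n)%N -> (j <= n)%N -> t = j%:R / n%:R ->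
  invariant_density (Tmap N \o Tmap n%:R)
    (fun x => m%:R / N + N^-1 * \1_`[0, t[ x).
Proof.
move=> N0 Nmt n0 jn tE.
have t0 : 0 <= t by rewrite tE divr_ge0.
have t1 : t <= 1 by rewrite tE ler_pdivrMr ?ltr0n // mul1r ler_nat.
have c0 : 0 <= m%:R / N by rewrite divr_ge0 // ltW.
have d0 : 0 <= N^-1 by rewrite invr_ge0 ltW.
have mass : m%:R / N + N^-1 * t = 1 by rewrite [N^-1 * t]mulrC -mulrDl -Nmt divff ?gt_eqF.
split; [|split; [|split]].
- apply: measurable_realfun.measurable_funD; first exact: measurable_cst.
  apply: measurable_realfun.measurable_funM; first exact: measurable_cst.
  exact: measurable_realfun.measurable_indic.
- by move=> x _; rewrite addr_ge0 ?mulr_ge0.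
- (* [Tmap N] maps [I01] into itself, so the total mass is [mu I01]. *)
  rewrite -[I01]setIid -(@lebesgue_Tmap_preimage N t m) ?t0 //;
    last exact: measurable_itv.
  rewrite (setIidl (fun x _ => I01_Tmap N x)) /I01 lebesgue_measure_itv /= lte_fin ltr01.
  by rewrite -EFinB subr0.
- move=> A mA AI.
  have mE : measurable (I01 `&` Tmap N @^-1` A).
    by apply: measurableI; [exact: measurable_itv|exact: measurable_Tmap_preimage].
  have -> : I01 `&` (Tmap N \o Tmap n%:R) @^-1` A =
            I01 `&` Tmap n%:R @^-1` (I01 `&` Tmap N @^-1` A).
    apply/seteqP; split => x /= [I01x]; last by case.
    by move=> Ax; split => //; split => //; exact: I01_Tmap.
  rewrite tE integral_step_Tmap_nat_preimage // -tE mass mul1e setIA setIid.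
  by rewrite (@lebesgue_Tmap_preimage N t m) ?t0 // (setIidr AI).
Qed.

End Tmap_lebesgue.

Theorem proposition2p1 (R : realType) (p q m r k : nat) :
  (1 < q)%N -> (q < p)%N -> coprime p q ->
  p = (m * q + r)%N -> (1 <= r)%N -> (r <= q - 1)%N ->
  (1 <= k)%N ->
  invariant_density
    (Tmap (p%:R / q%:R : R) \o Tmap ((k * q)%:R : R))
    (fun x : R => ((p - r)%:R / p%:R) *
        (1 + (q%:R / (p - r)%:R) * (\1_(`[0, r%:R / q%:R[%classic : set R) x))).
Proof.
move=> q1 qp _ pE _ rq k1.
have q0 : 0 < q%:R :> R by rewrite ltr0n; lia.
have p0 : 0 < p%:R :> R by rewrite ltr0n; lia.
have prE : (p - r)%N = (m * q)%N by lia.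
have m0 : 0 < m%:R :> R by rewrite ltr0n; lia.
have NE : p%:R / q%:R = m%:R + r%:R / q%:R :> R.
  by rewrite pE natrD natrM; field; rewrite gt_eqF.
rewrite (_ : (fun x : R => _) = fun x : R =>
    m%:R / (p%:R / q%:R) + (p%:R / q%:R)^-1 * \1_`[0, r%:R / q%:R[ x); last first.
  by apply/funext => x; rewrite prE natrM; field; rewrite !gt_eqF.
apply: (@invariant_density_Tmap_comp _ _ (r%:R / q%:R) m (k * q) (k * r)).
- exact: divr_gt0.
- exact: NE.
- by rewrite muln_gt0 k1 ltnW.
- by rewrite leq_mul2l; apply/orP; right; lia.
- rewrite !natrM -mulf_div divff ?mul1r // gt_eqF // ltr0n; lia.
Qed.
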